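(* Let $\mu>1/2$, $0<\nu<1/2$, $M>0$, and let $g_1,g_2\in X$ with $\|g_i\|_\infty\le M$; let $F_1,F_2$ be the corresponding functions $F[g_1],F[g_2]$. Then there is a constant $c(\mu,\nu,M)$ depending only on $\mu,\nu,M$ such that $$|F_1'(x)-F_2'(x)|\le c(\mu,\nu,M)\|g_2-g_1\|_\infty\frac{1}{|x|^{2\nu}(x^2+1)^{\mu-\nu}}\quad(x\ne0),$$ $$|F_1(x)-F_2(x)|\le c(\mu,\nu,M)\|g_2-g_1\|_\infty |x|^{1-2\mu}\quad(|x|\ge1),\qquad |F_1(x)-F_2(x)|\le c(\mu,\nu,M)\|g_2-g_1\|_\infty\quad(x\in\mathbb{R}).$$
   Context: $X=\{g\in C(\mathbb{R})\cap L^\infty(\mathbb{R})\text{ real}:\ \lim_{x\to\pm\infty}g(x)=0\}$ with sup norm. For $g\in X$: $h^{-1}(0)=0$, $(h^{-1})'(x)=|x|^{\nu-1}(x^2+1)^{(\mu-\nu)/2}e^{g(x)}$; $\kappa>0$ with $\int_{\mathbb{R}}\frac{\kappa}{x h^{-1}(x)(h^{-1})'(x)}dx=(\mu-\nu)\pi$; $F=F[g]$ is the continuous function with $F'(x)=\frac{\kappa}{xh^{-1}(x)(h^{-1})'(x)}$ ($x\neq0$) and $F(+\infty)=0$ (so $F(-\infty)=-(\mu-\nu)\pi$). *)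

From Stdlib Require Import Reals.
Open Scope R_scope.

Definition lim_pinfty (f : R -> R) (l : R) : Prop :=
  forall eps, 0 < eps -> exists A, forall x, A < x -> Rabs (f x - l) < eps.

Definition lim_minfty (f : R -> R) (l : R) : Prop :=
  forall eps, 0 < eps -> exists A, forall x, x < A -> Rabs (f x - l) < eps.

Definition in_X (g : R -> R) : Prop :=
  continuity g /\ (exists B, forall x, Rabs (g x) <= B) /\
  lim_pinfty g 0 /\ lim_minfty g 0.

Definition is_sup_norm (f : R -> R) (D : R) : Prop :=
  is_lub (fun y => exists x, y = Rabs (f x)) D.

Definition dhinv (mu nu : R) (g : R -> R) (x : R) : R :=
  Rpower (Rabs x) (nu - 1) * Rpower (x ^ 2 + 1) ((mu - nu) / 2) * exp (g x).

Definition is_hinv (mu nu : R) (g hinv : R -> R) : Prop :=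
  hinv 0 = 0 /\ continuity hinv /\
  (forall x, x <> 0 -> derivable_pt_lim hinv x (dhinv mu nu g x)).

Definition Fprime (mu nu : R) (g hinv : R -> R) (kappa x : R) : R :=
  kappa / (x * hinv x * dhinv mu nu g x).

(* The last two conditions together are equivalent to the normalisation
   int_R kappa/(x h^{-1} (h^{-1})') dx = (mu-nu) pi. *)
Definition is_F (mu nu : R) (g hinv : R -> R) (kappa : R) (F : R -> R) : Prop :=
  0 < kappa /\ continuity F /\
  (forall x, x <> 0 -> derivable_pt_lim F x (Fprime mu nu g hinv kappa x)) /\
  lim_pinfty F 0 /\ lim_minfty F (- ((mu - nu) * PI)).

(* Write F'(x) = kappa / Fdenom(x) with Fdenom(x) = x h^{-1}(x) (h^{-1})'(x), and
   rho(x) = |x|^(2 nu) (x^2+1)^(mu-nu).  The proof has three layers.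

   1. Comparison: x h^{-1}(x) is squeezed between e^{-M}/mu and e^M/nu times the explicit
      profile x |x|^(nu-1) (x^2+1)^((mu-nu)/2) (both vanish at 0 and their derivatives
      compare), so Fdenom is comparable to rho; two data with |g1 - g2| <= D have
      Fdenom's within a factor e^{2D}.
   2. Constants: the normalisation F(+oo) - F(-oo) = (mu-nu) pi gives kappa <= kappa_max
      and kappa1 <= e^{2D} kappa2 (a suitable combination of F1, F2 is monotone).  Hence
      F1', F2' agree up to a factor e^{4D}, so |F1' - F2'| <= C D / rho.
   3. Integration: a function vanishing at +-oo with derivative O(1/rho) is
      O(|x|^(1-2mu)) at infinity (2 mu > 1) and bounded near 0 (2 nu < 1).

   Monotonicity arguments only use derivatives off the origin plus continuity, through
   the mean value theorem. *)
From Stdlib Require Import Reals Lra.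
From Coquelicot Require Import Coquelicot.
Open Scope R_scope.

Lemma nondecr_open (h h' : R -> R) (a b : R) : a <= b ->
  (forall x, a <= x <= b -> continuity_pt h x) ->
  (forall x, a < x < b -> derivable_pt_lim h x (h' x)) ->
  (forall x, a < x < b -> 0 <= h' x) -> h a <= h b.
Proof.
  intros Hab Hc Hd Hp.
  destruct (MVT_gen h a b (fun x => Rmax 0 (h' x))) as [c [_ Hmvt]].
  - rewrite Rmin_left, Rmax_right by lra. intros x Hx.
    apply is_derive_Reals. rewrite Rmax_right by (apply Hp; lra). now apply Hd.
  - rewrite Rmin_left, Rmax_right by lra. exact Hc.
  - pose proof (Rmax_l 0 (h' c)). nra.
Qed.

(* The same when the derivative is only known away from the origin: split [a, b] at 0. *)
Lemma nondecr_punctured (h h' : R -> R) (a b : R) : a <= b ->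
  (forall x, a <= x <= b -> continuity_pt h x) ->
  (forall x, a < x < b -> x <> 0 -> derivable_pt_lim h x (h' x)) ->
  (forall x, a < x < b -> x <> 0 -> 0 <= h' x) -> h a <= h b.
Proof.
  intros Hab Hc Hd Hp.
  assert (Hpiece : forall u v, a <= u <= v -> v <= b -> v <= 0 \/ 0 <= u -> h u <= h v).
  { intros u v Huv Hvb Hsign. apply (nondecr_open h h'); try lra.
    - intros x Hx; apply Hc; lra.
    - intros x Hx; apply Hd; lra.
    - intros x Hx; apply Hp; lra. }
  destruct (Rle_or_lt b 0); [apply Hpiece; lra|].
  destruct (Rle_or_lt 0 a); [apply Hpiece; lra|].
  apply Rle_trans with (h 0); apply Hpiece; lra.
Qed.

Lemma nondecr_global (h h' : R -> R) : continuity h ->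
  (forall x, x <> 0 -> derivable_pt_lim h x (h' x)) ->
  (forall x, x <> 0 -> 0 <= h' x) -> forall a b, a <= b -> h a <= h b.
Proof.
  intros Hc Hd Hp a b Hab. apply (nondecr_punctured h h'); auto.
Qed.

(* Comparison principle through the origin: if h1 0 = h2 0 and h1' <= h2' off 0, then
   h2 - h1 has the sign of x, i.e. x h1(x) <= x h2(x). *)
Lemma comparison_through_origin (h1 h2 d1 d2 : R -> R) :
  continuity h1 -> continuity h2 -> h1 0 = h2 0 ->
  (forall x, x <> 0 -> derivable_pt_lim h1 x (d1 x)) ->
  (forall x, x <> 0 -> derivable_pt_lim h2 x (d2 x)) ->
  (forall x, x <> 0 -> d1 x <= d2 x) ->
  forall x, x * h1 x <= x * h2 x.
Proof.
  intros Hc1 Hc2 H0 Hd1 Hd2 Hle x.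
  assert (Hmono : forall a b, a <= b -> h2 a - h1 a <= h2 b - h1 b).
  { apply (nondecr_global (fun t => h2 t - h1 t) (fun t => d2 t - d1 t)).
    - exact (continuity_minus h2 h1 Hc2 Hc1).
    - intros t Ht. apply derivable_pt_lim_minus; auto.
    - intros t Ht. specialize (Hle t Ht). lra. }
  destruct (Rle_or_lt 0 x) as [Hx|Hx].
  - specialize (Hmono 0 x Hx). nra.
  - specialize (Hmono x 0 (Rlt_le _ _ Hx)). nra.
Qed.

Lemma Rpower_pos (a b : R) : 0 < Rpower a b.
Proof. apply exp_pos. Qed.

Lemma Rpower_1_base (b : R) : Rpower 1 b = 1.
Proof. unfold Rpower. rewrite ln_1, Rmult_0_r. apply exp_0. Qed.

Lemma exp_le (x y : R) : x <= y -> exp x <= exp y.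
Proof. intros [H|H]; [left; now apply exp_increasing | subst; lra]. Qed.

(* |t|^b = exp (b/2 ln t^2), a form auto_derive can differentiate (both sides are 1 at
   t = 0, where Stdlib's ln is 0). *)
Lemma Rpower_abs_exp (t b : R) : Rpower (Rabs t) b = exp (b / 2 * ln (t ^ 2)).
Proof.
  unfold Rpower. f_equal.
  destruct (Req_dec t 0) as [->|Ht].
  - assert (Hln0 : forall y, y <= 0 -> ln y = 0).
    { intros y Hy. unfold ln. destruct (Rlt_dec 0 y); [exfalso; lra|reflexivity]. }
    rewrite Rabs_R0, !Hln0 by (simpl; lra). ring.
  - replace (t ^ 2) with (Rabs t * Rabs t) by (rewrite <- pow2_abs; ring).
    rewrite ln_mult by (apply Rabs_pos_lt; auto). field.
Qed.

Definition spow (b t : R) : R := t * Rpower (Rabs t) b.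

Lemma spow_derive (b x : R) : x <> 0 ->
  derivable_pt_lim (spow b) x ((1 + b) * Rpower (Rabs x) b).
Proof.
  intros Hx. apply is_derive_Reals.
  apply is_derive_ext with (fun t => t * exp (b / 2 * ln (t ^ 2))).
  { intros t. unfold spow. now rewrite Rpower_abs_exp. }
  rewrite Rpower_abs_exp.
  assert (0 < x ^ 2) by (apply pow2_gt_0; auto).
  auto_derive; [lra|]. replace (x * (x * 1)) with (x ^ 2) by ring. field. auto.
Qed.

Lemma spow_abs (b x : R) : x <> 0 -> Rabs (spow b x) = Rpower (Rabs x) (1 + b).
Proof.
  intros Hx. unfold spow.
  rewrite Rabs_mult, (Rabs_right (Rpower _ _)) by (left; apply Rpower_pos).
  rewrite Rpower_plus, Rpower_1 by (apply Rabs_pos_lt; auto). reflexivity.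
Qed.

Lemma spow_cont (b x : R) : x <> 0 \/ 0 < 1 + b -> continuity_pt (spow b) x.
Proof.
  intros Hcase. destruct (Req_dec x 0) as [->|Hx].
  2:{ apply derivable_continuous_pt. eexists. now apply spow_derive. }
  destruct Hcase as [Hx|Hb]; [contradiction|].
  (* At 0: |spow b t| = |t|^(1+b) < eps as soon as |t| < eps^(1/(1+b)). *)
  intros eps Heps. exists (Rpower eps (/ (1 + b))). split; [apply Rpower_pos|].
  intros t [[_ Ht0] Ht]. simpl in *. unfold R_dist in *.
  unfold spow at 2. rewrite Rmult_0_l, !Rminus_0_r in *.
  rewrite spow_abs by auto.
  replace eps with (Rpower (Rpower eps (/ (1 + b))) (1 + b)).
  - apply Rlt_Rpower_l; [lra|]. split; auto. apply Rabs_pos_lt; auto.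
  - rewrite Rpower_mult, Rinv_l, Rpower_1 by lra. reflexivity.
Qed.

Lemma Rpower_sq1_derive (p x : R) :
  derivable_pt_lim (fun t => Rpower (t ^ 2 + 1) p) x
    (p * (2 * x) / (x ^ 2 + 1) * Rpower (x ^ 2 + 1) p).
Proof.
  apply is_derive_Reals. unfold Rpower.
  assert (0 < x ^ 2 + 1) by (pose proof (pow2_ge_0 x); lra).
  auto_derive; [lra|]. replace (x * (x * 1) + 1) with (x ^ 2 + 1) by ring. field. lra.
Qed.

Lemma lim_pinfty_witness (f : R -> R) (l x eps : R) : lim_pinfty f l -> 0 < eps ->
  exists y, x <= y /\ Rabs (f y - l) < eps.
Proof.
  intros Hl Heps. destruct (Hl eps Heps) as [A HA].
  exists (Rmax A x + 1). split.
  - pose proof (Rmax_r A x). lra.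
  - apply HA. pose proof (Rmax_l A x). lra.
Qed.

Lemma lim_minfty_reflect (f : R -> R) (l : R) :
  lim_minfty f l -> lim_pinfty (fun x => f (- x)) l.
Proof.
  intros Hl eps Heps. destruct (Hl eps Heps) as [A HA].
  exists (- A). intros x Hx. apply HA. lra.
Qed.

Lemma lim_minfty_witness (f : R -> R) (l x eps : R) : lim_minfty f l -> 0 < eps ->
  exists y, y <= x /\ Rabs (f y - l) < eps.
Proof.
  intros Hl Heps.
  destruct (lim_pinfty_witness _ l (- x) eps (lim_minfty_reflect f l Hl) Heps) as [y [Hy Hfy]].
  exists (- y). split; [lra|exact Hfy].
Qed.

Lemma lim_pinfty_comb (f g h : R -> R) (u v a b l : R) :
  (forall x, h x = u * f x - v * g x) -> l = u * a - v * b ->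
  lim_pinfty f a -> lim_pinfty g b -> lim_pinfty h l.
Proof.
  intros Hh -> Hf Hg eps Heps.
  set (C := Rabs u + Rabs v + 1).
  assert (HC : 0 < C) by (unfold C; pose proof (Rabs_pos u); pose proof (Rabs_pos v); lra).
  assert (He : 0 < eps / C) by (apply Rdiv_lt_0_compat; lra).
  destruct (Hf _ He) as [A1 HA1]. destruct (Hg _ He) as [A2 HA2].
  exists (Rmax A1 A2). intros x Hx.
  pose proof (Rmax_l A1 A2). pose proof (Rmax_r A1 A2).
  assert (Hfx : Rabs (f x - a) < eps / C) by (apply HA1; lra).
  assert (Hgx : Rabs (g x - b) < eps / C) by (apply HA2; lra).
  rewrite Hh. replace (u * f x - v * g x - (u * a - v * b))
    with (u * (f x - a) + - (v * (g x - b))) by ring.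
  eapply Rle_lt_trans; [apply Rabs_triang|]. rewrite Rabs_Ropp, !Rabs_mult.
  assert (Hu : Rabs u * Rabs (f x - a) <= Rabs u * (eps / C))
    by (apply Rmult_le_compat_l; [apply Rabs_pos|lra]).
  assert (Hv : Rabs v * Rabs (g x - b) <= Rabs v * (eps / C))
    by (apply Rmult_le_compat_l; [apply Rabs_pos|lra]).
  assert (Hsum : (Rabs u + Rabs v) * (eps / C) < eps).
  { replace (Rabs u + Rabs v) with (C - 1) by (unfold C; ring).
    rewrite Rmult_minus_distr_r, Rmult_1_l.
    replace (C * (eps / C)) with eps by (field; lra). lra. }
  lra.
Qed.

Lemma lim_minfty_comb (f g h : R -> R) (u v a b l : R) :
  (forall x, h x = u * f x - v * g x) -> l = u * a - v * b ->
  lim_minfty f a -> lim_minfty g b -> lim_minfty h l.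
Proof.
  intros Hh Hl Hf Hg eps Heps.
  destruct (lim_pinfty_comb (fun x => f (- x)) (fun x => g (- x)) (fun x => h (- x))
              u v a b l (fun x => Hh (- x)) Hl
              (lim_minfty_reflect f a Hf) (lim_minfty_reflect g b Hg) eps Heps) as [A HA].
  exists (- A). intros x Hx. rewrite <- (Ropp_involutive x). apply HA. lra.
Qed.

Lemma lim_pinfty_lower (f : R -> R) (l x A : R) : lim_pinfty f l ->
  (forall y, x <= y -> A <= f y) -> A <= l.
Proof.
  intros Hl HA. destruct (Rle_or_lt A l) as [|Hlt]; [assumption|].
  destruct (lim_pinfty_witness f l x (A - l) Hl) as [y [Hy Hfy]]; [lra|].
  apply Rabs_def2 in Hfy. specialize (HA y Hy). lra.
Qed.

Lemma lim_minfty_upper (f : R -> R) (l x A : R) : lim_minfty f l ->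
  (forall y, y <= x -> f y <= A) -> l <= A.
Proof.
  intros Hl HA. destruct (Rle_or_lt l A) as [|Hlt]; [assumption|].
  destruct (lim_minfty_witness f l x (l - A) Hl) as [y [Hy Hfy]]; [lra|].
  apply Rabs_def2 in Hfy. specialize (HA y Hy). lra.
Qed.

Lemma lim_pinfty_dist (f : R -> R) (l x C : R) : lim_pinfty f l ->
  (forall y, x <= y -> Rabs (f x - f y) <= C) -> Rabs (f x - l) <= C.
Proof.
  intros Hl HC. destruct (Rle_or_lt (Rabs (f x - l)) C) as [|Hlt]; [assumption|].
  destruct (lim_pinfty_witness f l x (Rabs (f x - l) - C) Hl) as [y [Hy Hfy]]; [lra|].
  specialize (HC y Hy).
  pose proof (Rabs_triang (f x - f y) (f y - l)).
  replace (f x - f y + (f y - l)) with (f x - l) in * by ring. lra.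
Qed.

Lemma lim_minfty_dist (f : R -> R) (l x C : R) : lim_minfty f l ->
  (forall y, y <= x -> Rabs (f x - f y) <= C) -> Rabs (f x - l) <= C.
Proof.
  intros Hl HC. rewrite <- (Ropp_involutive x).
  apply (lim_pinfty_dist (fun t => f (- t))); [now apply lim_minfty_reflect|].
  intros y Hy. rewrite Ropp_involutive. apply HC. lra.
Qed.

(* If |f'(x)| <= K |x|^b off 0, then f varies by at most K/(1+b) times the variation of
   spow b (whose derivative is (1+b)|x|^b), on intervals where spow b is continuous. *)
Lemma integrated_bound (f df : R -> R) (K b a c : R) : 1 + b <> 0 -> a <= c ->
  (forall x, a <= x <= c -> continuity_pt f x) ->
  (forall x, a <= x <= c -> continuity_pt (spow b) x) ->
  (forall x, x <> 0 -> derivable_pt_lim f x (df x)) ->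
  (forall x, x <> 0 -> Rabs (df x) <= K * Rpower (Rabs x) b) ->
  Rabs (f c - f a) <= K / (1 + b) * (spow b c - spow b a).
Proof.
  intros Hb Hac Hfc Hsc Hfd Hdf.
  set (k := K / (1 + b)).
  assert (Hk : forall x, k * ((1 + b) * Rpower (Rabs x) b) = K * Rpower (Rabs x) b)
    by (intros; unfold k; field; auto).
  assert (Hle : forall s : R, s = 1 \/ s = -1 ->
            s * f a + k * spow b a <= s * f c + k * spow b c).
  { intros s Hs.
    apply (nondecr_punctured (fun t => s * f t + k * spow b t)
             (fun t => s * df t + k * ((1 + b) * Rpower (Rabs t) b))); auto.
    - intros x Hx. apply continuity_pt_plus.
      + apply continuity_pt_scal with (f := f). auto.
      + apply continuity_pt_scal with (f := spow b). auto.
    - intros x _ Hx. apply derivable_pt_lim_plus.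
      + apply derivable_pt_lim_scal with (f := f). auto.
      + apply derivable_pt_lim_scal with (f := spow b). now apply spow_derive.
    - intros x _ Hx. rewrite Hk. pose proof (Hdf x Hx) as Hd. apply Rabs_le_between in Hd.
      destruct Hs as [-> | ->]; lra. }
  pose proof (Hle 1 (or_introl eq_refl)). pose proof (Hle (-1) (or_intror eq_refl)).
  apply Rabs_le. lra.
Qed.

Lemma tail_decay (f df : R -> R) (K mu : R) : 1 / 2 < mu -> 0 <= K -> continuity f ->
  (forall x, x <> 0 -> derivable_pt_lim f x (df x)) ->
  (forall x, x <> 0 -> Rabs (df x) <= K * Rpower (Rabs x) (- (2 * mu))) ->
  lim_pinfty f 0 -> lim_minfty f 0 ->
  forall x, x <> 0 -> Rabs (f x) <= K / (2 * mu - 1) * Rpower (Rabs x) (1 - 2 * mu).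
Proof.
  intros Hmu HK Hfc Hfd Hdf Hp Hm x Hx.
  set (b := - (2 * mu)).
  assert (Hb : 1 + b <> 0) by (unfold b; lra).
  set (k := K / (2 * mu - 1)).
  assert (Hk : K / (1 + b) = - k) by (unfold k, b; field; lra).
  assert (Hk0 : 0 <= k) by (apply Rdiv_le_0_compat; lra).
  assert (Hsx : Rabs (spow b x) = Rpower (Rabs x) (1 - 2 * mu)).
  { rewrite spow_abs by auto. unfold b. f_equal. }
  rewrite <- Hsx, <- (Rminus_0_r (f x)).
  pose proof (Rle_abs (spow b x)). pose proof (Rle_abs (- spow b x)). rewrite Rabs_Ropp in *.
  destruct (Rle_or_lt 0 x) as [Hx0|Hx0].
  - apply (lim_pinfty_dist f 0 x); auto. intros y Hy. rewrite Rabs_minus_sym.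
    eapply Rle_trans.
    { apply (integrated_bound f df K b x y Hb Hy); auto.
      intros t Ht. apply spow_cont. left. lra. }
    assert (0 <= spow b y) by (unfold spow; pose proof (Rpower_pos (Rabs y) b); nra).
    rewrite Hk. nra.
  - apply (lim_minfty_dist f 0 x); auto. intros y Hy.
    eapply Rle_trans.
    { apply (integrated_bound f df K b y x Hb Hy); auto.
      intros t Ht. apply spow_cont. left. lra. }
    assert (spow b y <= 0) by (unfold spow; pose proof (Rpower_pos (Rabs y) b); nra).
    rewrite Hk. nra.
Qed.

Lemma near_origin_bound (f df : R -> R) (K b : R) : 0 < 1 + b -> 0 <= K -> continuity f ->
  (forall x, x <> 0 -> derivable_pt_lim f x (df x)) ->
  (forall x, x <> 0 -> Rabs (df x) <= K * Rpower (Rabs x) b) ->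
  forall x, Rabs x <= 1 -> Rabs (f x - f 1) <= 2 * K / (1 + b).
Proof.
  intros Hb HK Hfc Hfd Hdf x Hx.
  assert (Hs : forall t, Rabs t <= 1 -> Rabs (spow b t) <= 1).
  { intros t Ht. destruct (Req_dec t 0) as [->|Ht0].
    - unfold spow. rewrite Rmult_0_l, Rabs_R0. lra.
    - rewrite spow_abs by auto. rewrite <- (Rpower_1_base (1 + b)) at 2.
      apply Rle_Rpower_l; [lra|]. split; [now apply Rabs_pos_lt|lra]. }
  assert (Hk : 0 <= K / (1 + b)) by (apply Rdiv_le_0_compat; lra).
  apply Rabs_le_between in Hx as Hx'.
  rewrite Rabs_minus_sym. eapply Rle_trans.
  { apply (integrated_bound f df K b x 1 ltac:(lra) ltac:(lra)); auto.
    intros t _. apply spow_cont. now right. }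
  pose proof (Hs x Hx) as Hsx. pose proof (Hs 1 ltac:(rewrite Rabs_R1; lra)) as Hs1.
  apply Rabs_le_between in Hsx. apply Rabs_le_between in Hs1.
  replace (2 * K / (1 + b)) with (K / (1 + b) * 2) by (field; lra).
  apply Rmult_le_compat_l; lra.
Qed.

Definition weight (mu nu x : R) : R :=
  Rpower (Rabs x) (nu - 1) * Rpower (x ^ 2 + 1) ((mu - nu) / 2).

(* x |x|^(nu-1) (x^2+1)^((mu-nu)/2): its derivative lies between nu and mu times the weight,
   so it is the model of h^{-1} up to the factor e^{+-M}. *)
Definition profile (mu nu x : R) : R := spow (nu - 1) x * Rpower (x ^ 2 + 1) ((mu - nu) / 2).

Definition dprofile (mu nu x : R) : R := weight mu nu x * (nu + (mu - nu) * (x ^ 2 / (x ^ 2 + 1))).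

Definition rho (mu nu x : R) : R := Rpower (Rabs x) (2 * nu) * Rpower (x ^ 2 + 1) (mu - nu).

Lemma weight_pos (mu nu x : R) : 0 < weight mu nu x.
Proof. apply Rmult_lt_0_compat; apply Rpower_pos. Qed.

Lemma rho_pos (mu nu x : R) : 0 < rho mu nu x.
Proof. apply Rmult_lt_0_compat; apply Rpower_pos. Qed.

Lemma profile_derive (mu nu x : R) : x <> 0 ->
  derivable_pt_lim (profile mu nu) x (dprofile mu nu x).
Proof.
  intros Hx.
  pose proof (derivable_pt_lim_mult _ _ x _ _ (spow_derive (nu - 1) x Hx)
                (Rpower_sq1_derive ((mu - nu) / 2) x)) as Hd.
  assert (0 < x ^ 2 + 1) by (pose proof (pow2_ge_0 x); lra).
  unfold mult_fct in Hd. unfold profile, dprofile, weight.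
  match type of Hd with derivable_pt_lim _ _ ?l => replace (_ * _) with l end.
  - exact Hd.
  - unfold spow. field. lra.
Qed.

Lemma dprofile_bounds (mu nu x : R) : nu <= mu ->
  nu * weight mu nu x <= dprofile mu nu x <= mu * weight mu nu x.
Proof.
  intros Hmn. unfold dprofile. pose proof (weight_pos mu nu x).
  assert (0 < x ^ 2 + 1) by (pose proof (pow2_ge_0 x); lra).
  assert (0 <= x ^ 2 / (x ^ 2 + 1) <= 1).
  { split; [apply Rdiv_le_0_compat; [apply pow2_ge_0|lra]|].
    apply Rmult_le_reg_r with (x ^ 2 + 1); [lra|]. field_simplify; lra. }
  set (s := x ^ 2 / (x ^ 2 + 1)) in *.
  assert (0 <= (mu - nu) * s <= mu - nu) by (split; nra).
  split; nra.
Qed.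

(* Continuity at 0 needs nu > 0 (spow (nu - 1) is continuous there). *)
Lemma profile_cont (mu nu : R) : 0 < nu -> continuity (profile mu nu).
Proof.
  intros Hnu x. apply continuity_pt_mult.
  - apply spow_cont. right. lra.
  - apply derivable_continuous_pt. eexists. apply Rpower_sq1_derive.
Qed.

(* rho = x profile(x) weight(x): this links Fdenom to rho. *)
Lemma rho_factor (mu nu x : R) : x <> 0 ->
  rho mu nu x = x * profile mu nu x * weight mu nu x.
Proof.
  intros Hx. unfold rho, profile, weight, spow.
  replace (2 * nu) with (1 + 1 + (nu - 1) + (nu - 1)) by ring.
  replace (mu - nu) with ((mu - nu) / 2 + (mu - nu) / 2) at 1 by field.
  rewrite !Rpower_plus, Rpower_1 by (apply Rabs_pos_lt; auto).
  replace (Rabs x * Rabs x) with (x * x)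
    by (rewrite <- Rabs_mult, Rabs_right; [reflexivity|nra]).
  ring.
Qed.

(* x profile(x) = x^2 weight(x) > 0 off the origin. *)
Lemma xprofile_pos (mu nu x : R) : x <> 0 -> 0 < x * profile mu nu x.
Proof.
  intros Hx. replace (x * profile mu nu x) with (x ^ 2 * weight mu nu x)
    by (unfold profile, weight, spow; ring).
  apply Rmult_lt_0_compat; [now apply pow2_gt_0|apply weight_pos].
Qed.

Section InverseBounds.
Variables (mu nu M : R) (g hinv : R -> R).
Hypotheses (Hnu : 0 < nu) (Hmn : nu <= mu) (HgM : forall x, Rabs (g x) <= M)
  (Hh : is_hinv mu nu g hinv).

(* Lower comparison: e^{-M}/mu times the profile has a smaller derivative than h^{-1}. *)
Lemma hinv_lower (x : R) : exp (- M) / mu * (x * profile mu nu x) <= x * hinv x.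
Proof.
  destruct Hh as [H0 [Hc Hd]].
  set (k := exp (- M) / mu).
  assert (Hk : 0 < k) by (apply Rdiv_lt_0_compat; [apply exp_pos|lra]).
  replace (k * (x * profile mu nu x)) with (x * (k * profile mu nu x)) by ring.
  apply (comparison_through_origin (fun t => k * profile mu nu t) hinv
           (fun t => k * dprofile mu nu t) (dhinv mu nu g)); auto.
  - intro t. apply continuity_pt_scal with (f := profile mu nu). now apply profile_cont.
  - rewrite H0. unfold profile, spow. ring.
  - intros t Ht. apply derivable_pt_lim_scal with (f := profile mu nu).
    now apply profile_derive.
  - intros t Ht. pose proof (dprofile_bounds mu nu t Hmn) as [_ Hup].
    pose proof (weight_pos mu nu t).
    assert (exp (- M) <= exp (g t))
      by (apply exp_le; pose proof (HgM t) as Hg; apply Rabs_le_between in Hg; lra).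
    change (dhinv mu nu g t) with (weight mu nu t * exp (g t)).
    apply Rle_trans with (exp (- M) * weight mu nu t); [|nra].
    unfold k. apply Rmult_le_reg_l with mu; [lra|].
    replace (mu * (exp (- M) / mu * dprofile mu nu t)) with (exp (- M) * dprofile mu nu t)
      by (field; lra).
    pose proof (exp_pos (- M)). nra.
Qed.

(* Upper comparison: e^M/nu times the profile has a larger derivative than h^{-1}. *)
Lemma hinv_upper (x : R) : x * hinv x <= exp M / nu * (x * profile mu nu x).
Proof.
  destruct Hh as [H0 [Hc Hd]].
  set (k := exp M / nu).
  assert (Hk : 0 < k) by (apply Rdiv_lt_0_compat; [apply exp_pos|lra]).
  replace (k * (x * profile mu nu x)) with (x * (k * profile mu nu x)) by ring.
  apply (comparison_through_origin hinv (fun t => k * profile mu nu t)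
           (dhinv mu nu g) (fun t => k * dprofile mu nu t)); auto.
  - intro t. apply continuity_pt_scal with (f := profile mu nu). now apply profile_cont.
  - rewrite H0. unfold profile, spow. ring.
  - intros t Ht. apply derivable_pt_lim_scal with (f := profile mu nu).
    now apply profile_derive.
  - intros t Ht. pose proof (dprofile_bounds mu nu t Hmn) as [Hlow _].
    pose proof (weight_pos mu nu t).
    assert (exp (g t) <= exp M)
      by (apply exp_le; pose proof (HgM t) as Hg; apply Rabs_le_between in Hg; lra).
    change (dhinv mu nu g t) with (weight mu nu t * exp (g t)).
    apply Rle_trans with (exp M * weight mu nu t); [nra|].
    unfold k. apply Rmult_le_reg_l with nu; [lra|].
    replace (nu * (exp M / nu * dprofile mu nu t)) with (exp M * dprofile mu nu t)
      by (field; lra).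
    pose proof (exp_pos M). nra.
Qed.

Lemma hinv_sign (x : R) : 0 <= x * hinv x.
Proof.
  destruct (Req_dec x 0) as [->|Hx]; [lra|].
  eapply Rle_trans; [|apply hinv_lower]. left. apply Rmult_lt_0_compat.
  - apply Rdiv_lt_0_compat; [apply exp_pos|lra].
  - now apply xprofile_pos.
Qed.

End InverseBounds.

Lemma hinv_compare (mu nu D : R) (g1 g2 hinv1 hinv2 : R -> R) :
  (forall x, g2 x - g1 x <= D) -> is_hinv mu nu g1 hinv1 -> is_hinv mu nu g2 hinv2 ->
  forall x, x * hinv2 x <= exp D * (x * hinv1 x).
Proof.
  intros HD [H10 [Hc1 Hd1]] [H20 [Hc2 Hd2]] x.
  replace (exp D * (x * hinv1 x)) with (x * (exp D * hinv1 x)) by ring.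
  apply (comparison_through_origin hinv2 (fun t => exp D * hinv1 t)
           (dhinv mu nu g2) (fun t => exp D * dhinv mu nu g1 t)); auto.
  - intro t. apply continuity_pt_scal with (f := hinv1). auto.
  - rewrite H10, H20. ring.
  - intros t Ht. apply derivable_pt_lim_scal with (f := hinv1). auto.
  - intros t Ht. change (dhinv mu nu g2 t) with (weight mu nu t * exp (g2 t)).
    change (dhinv mu nu g1 t) with (weight mu nu t * exp (g1 t)).
    pose proof (weight_pos mu nu t).
    assert (exp (g2 t) <= exp D * exp (g1 t))
      by (rewrite <- exp_plus; apply exp_le; specialize (HD t); lra).
    nra.
Qed.

Definition Fdenom (mu nu : R) (g hinv : R -> R) (x : R) : R := x * hinv x * dhinv mu nu g x.

Definition kappa_max (mu nu M : R) : R := (mu - nu) * PI * Rpower 2 (mu - nu) * exp (2 * M) / nu.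

Lemma rho_le_unit (mu nu x : R) : 0 <= nu <= mu -> x <> 0 -> Rabs x <= 1 ->
  rho mu nu x <= Rpower 2 (mu - nu).
Proof.
  intros Hmn Hx Hx1. unfold rho. rewrite <- (Rmult_1_l (Rpower 2 (mu - nu))).
  pose proof (Rabs_pos_lt x Hx).
  apply Rmult_le_compat; try (left; apply Rpower_pos).
  - rewrite <- (Rpower_1_base (2 * nu)). apply Rle_Rpower_l; lra.
  - apply Rle_Rpower_l; [lra|]. rewrite <- pow2_abs. split; nra.
Qed.

Section OneDatum.
Variables (mu nu M kappa : R) (g hinv F : R -> R).
Hypotheses (Hnu : 0 < nu) (Hmn : nu < mu) (HgM : forall x, Rabs (g x) <= M)
  (Hh : is_hinv mu nu g hinv) (HF : is_F mu nu g hinv kappa F).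

Lemma Fdenom_bounds (x : R) : x <> 0 ->
  exp (- (2 * M)) / mu * rho mu nu x <= Fdenom mu nu g hinv x <=
  exp (2 * M) / nu * rho mu nu x.
Proof.
  intros Hx. rewrite rho_factor by auto. unfold Fdenom.
  change (dhinv mu nu g x) with (weight mu nu x * exp (g x)).
  pose proof (hinv_lower mu nu M g hinv Hnu (Rlt_le _ _ Hmn) HgM Hh x) as Hlow.
  pose proof (hinv_upper mu nu M g hinv Hnu (Rlt_le _ _ Hmn) HgM Hh x) as Hup.
  pose proof (xprofile_pos mu nu x Hx). pose proof (weight_pos mu nu x).
  pose proof (HgM x) as Hg. apply Rabs_le_between in Hg.
  assert (HG : exp (- M) <= exp (g x) <= exp M) by (split; apply exp_le; lra).
  assert (0 < exp (- M) / mu) by (apply Rdiv_lt_0_compat; [apply exp_pos|lra]).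
  pose proof (exp_pos (- M)). pose proof (exp_pos (g x)).
  assert (E2 : forall s, exp (s * (2 * M)) = exp (s * M) * exp (s * M))
    by (intro s; rewrite <- exp_plus; f_equal; ring).
  pose proof (E2 1) as E2p. pose proof (E2 (-1)) as E2m.
  rewrite !Rmult_1_l in E2p. replace (-1 * (2 * M)) with (- (2 * M)) in E2m by ring.
  replace (-1 * M) with (- M) in E2m by ring.
  split.
  - replace (exp (- (2 * M)) / mu * (x * profile mu nu x * weight mu nu x))
      with (exp (- M) / mu * (x * profile mu nu x) * (weight mu nu x * exp (- M)))
      by (rewrite E2m; field; lra).
    apply Rmult_le_compat; nra.
  - replace (exp (2 * M) / nu * (x * profile mu nu x * weight mu nu x))
      with (exp M / nu * (x * profile mu nu x) * (weight mu nu x * exp M))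
      by (rewrite E2p; field; lra).
    apply Rmult_le_compat; nra.
Qed.

Lemma Fdenom_pos (x : R) : x <> 0 -> 0 < Fdenom mu nu g hinv x.
Proof.
  intros Hx. eapply Rlt_le_trans; [|apply (Fdenom_bounds x Hx)].
  apply Rmult_lt_0_compat; [|apply rho_pos]. apply Rdiv_lt_0_compat; [apply exp_pos|lra].
Qed.

Lemma Fprime_bounds (x : R) : x <> 0 ->
  kappa * (nu * exp (- (2 * M))) / rho mu nu x <= Fprime mu nu g hinv kappa x <=
  kappa * (mu * exp (2 * M)) / rho mu nu x.
Proof.
  intros Hx. destruct HF as [Hk _].
  change (Fprime mu nu g hinv kappa x) with (kappa / Fdenom mu nu g hinv x).
  destruct (Fdenom_bounds x Hx) as [Hlow Hup].
  pose proof (rho_pos mu nu x). pose proof (exp_pos (2 * M)).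
  assert (0 < exp (- (2 * M)) / mu * rho mu nu x)
    by (apply Rmult_lt_0_compat; [apply Rdiv_lt_0_compat; [apply exp_pos|lra]|lra]).
  rewrite exp_Ropp in *. unfold Rdiv. rewrite !Rmult_assoc. split.
  - apply Rmult_le_compat_l; [lra|].
    apply Rle_trans with (/ (exp (2 * M) * / nu * rho mu nu x)).
    + right. field. repeat split; lra.
    + apply Rinv_le_contravar; lra.
  - apply Rmult_le_compat_l; [lra|].
    apply Rle_trans with (/ (/ exp (2 * M) * / mu * rho mu nu x)).
    + apply Rinv_le_contravar; lra.
    + right. field. repeat split; lra.
Qed.

Lemma Fprime_pos (x : R) : x <> 0 -> 0 < Fprime mu nu g hinv kappa x.
Proof.
  intros Hx. destruct HF as [Hk _]. eapply Rlt_le_trans; [|apply (Fprime_bounds x Hx)].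
  apply Rdiv_lt_0_compat; [|apply rho_pos].
  apply Rmult_lt_0_compat; [lra|]. apply Rmult_lt_0_compat; [lra|apply exp_pos].
Qed.

Lemma F_nondecr : forall a b, a <= b -> F a <= F b.
Proof.
  destruct HF as [_ [Hc [Hd _]]].
  apply (nondecr_global F (Fprime mu nu g hinv kappa) Hc Hd).
  intros x Hx. left. now apply Fprime_pos.
Qed.

(* F rises by at most (mu - nu) pi while F' >= kappa nu e^{-2M} / 2^(mu-nu) on ]0, 1[. *)
Lemma kappa_bound : kappa <= kappa_max mu nu M.
Proof.
  destruct HF as [Hk [Hc [Hd [Hp Hm]]]].
  set (m := nu * exp (- (2 * M)) / Rpower 2 (mu - nu)).
  assert (Hm0 : 0 < m).
  { apply Rdiv_lt_0_compat; [|apply Rpower_pos].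
    apply Rmult_lt_0_compat; [lra|apply exp_pos]. }
  assert (Hrise : F 0 - kappa * m * 0 <= F 1 - kappa * m * 1).
  { apply (nondecr_punctured (fun t => F t - kappa * m * t)
             (fun t => Fprime mu nu g hinv kappa t - kappa * m * 1)); try lra.
    - intros x _. apply continuity_pt_minus; [apply Hc|].
      apply continuity_pt_scal with (f := id). apply derivable_continuous_pt, derivable_pt_id.
    - intros x _ Hx. apply derivable_pt_lim_minus; [auto|].
      apply derivable_pt_lim_scal with (f := id). apply derivable_pt_lim_id.
    - intros x Hx Hx0.
      pose proof (rho_le_unit mu nu x ltac:(lra) Hx0 ltac:(rewrite Rabs_right; lra)).
      pose proof (rho_pos mu nu x). pose proof (exp_pos (- (2 * M))).
      destruct (Fprime_bounds x Hx0) as [Hlow _].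
      enough (kappa * m <= kappa * (nu * exp (- (2 * M))) / rho mu nu x) by lra.
      unfold m, Rdiv. rewrite !Rmult_assoc.
      do 3 (apply Rmult_le_compat_l; [lra|]). apply Rinv_le_contravar; lra. }
  assert (HF1 : F 1 <= 0)
    by (apply (lim_pinfty_lower F 0 1 (F 1) Hp); intros; now apply F_nondecr).
  assert (HF0 : - ((mu - nu) * PI) <= F 0)
    by (apply (lim_minfty_upper F _ 0 (F 0) Hm); intros; now apply F_nondecr).
  assert (Hkm : kappa * m <= (mu - nu) * PI) by lra.
  unfold kappa_max. unfold m in Hkm. rewrite exp_Ropp in Hkm.
  pose proof (exp_pos (2 * M)). pose proof (Rpower_pos 2 (mu - nu)).
  apply Rmult_le_reg_r with (nu * / exp (2 * M) / Rpower 2 (mu - nu)).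
  - apply Rdiv_lt_0_compat; [|lra]. apply Rmult_lt_0_compat; [lra|]. now apply Rinv_0_lt_compat.
  - replace ((mu - nu) * PI * Rpower 2 (mu - nu) * exp (2 * M) / nu
               * (nu * / exp (2 * M) / Rpower 2 (mu - nu))) with ((mu - nu) * PI)
      by (field; lra). lra.
Qed.

End OneDatum.

Lemma inv_le_scaled (a b c : R) : 0 < a -> 0 < c -> a <= c * b -> / b <= c * / a.
Proof.
  intros Ha Hc Hab. assert (0 < b) by nra.
  replace (/ b) with (c * / (c * b)) by (field; lra).
  apply Rmult_le_compat_l; [lra|]. apply Rinv_le_contravar; lra.
Qed.

Section OneSidedComparison.
Variables (mu nu M D kappa1 kappa2 : R) (g1 g2 hinv1 hinv2 F1 F2 : R -> R).
Hypotheses (Hnu : 0 < nu) (Hmn : nu < mu)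
  (Hg1 : forall x, Rabs (g1 x) <= M) (Hg2 : forall x, Rabs (g2 x) <= M)
  (HD : forall x, g1 x - g2 x <= D)
  (Hh1 : is_hinv mu nu g1 hinv1) (Hh2 : is_hinv mu nu g2 hinv2)
  (HF1 : is_F mu nu g1 hinv1 kappa1 F1) (HF2 : is_F mu nu g2 hinv2 kappa2 F2).

(* If g1 - g2 <= D, then Fdenom1 <= e^{2D} Fdenom2: a factor e^D from h^{-1} and one
   from e^g. *)
Lemma Fdenom_compare (x : R) :
  Fdenom mu nu g1 hinv1 x <= exp (2 * D) * Fdenom mu nu g2 hinv2 x.
Proof.
  unfold Fdenom.
  change (dhinv mu nu g1 x) with (weight mu nu x * exp (g1 x)).
  change (dhinv mu nu g2 x) with (weight mu nu x * exp (g2 x)).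
  pose proof (hinv_compare mu nu D g2 g1 hinv2 hinv1 HD Hh2 Hh1 x).
  pose proof (hinv_sign mu nu M g1 hinv1 Hnu (Rlt_le _ _ Hmn) Hg1 Hh1 x).
  pose proof (weight_pos mu nu x). pose proof (exp_pos (g1 x)).
  assert (exp (g1 x) <= exp D * exp (g2 x))
    by (rewrite <- exp_plus; apply exp_le; specialize (HD x); lra).
  replace (exp (2 * D) * (x * hinv2 x * (weight mu nu x * exp (g2 x))))
    with (exp D * (x * hinv2 x) * (weight mu nu x * (exp D * exp (g2 x))))
    by (replace (2 * D) with (D + D) by ring; rewrite exp_plus; ring).
  apply Rmult_le_compat; try nra.
Qed.

(* Normalised derivatives: F2'/kappa2 = 1/Fdenom2 <= e^{2D}/Fdenom1 = e^{2D} F1'/kappa1. *)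
Lemma normalised_Fprime_compare (x : R) : x <> 0 ->
  / kappa2 * Fprime mu nu g2 hinv2 kappa2 x
  <= exp (2 * D) / kappa1 * Fprime mu nu g1 hinv1 kappa1 x.
Proof.
  intros Hx. destruct HF1 as [Hk1 _]. destruct HF2 as [Hk2 _].
  pose proof (Fdenom_pos mu nu M g1 hinv1 Hnu Hmn Hg1 Hh1 x Hx) as Hd1.
  pose proof (Fdenom_pos mu nu M g2 hinv2 Hnu Hmn Hg2 Hh2 x Hx) as Hd2.
  pose proof (inv_le_scaled _ _ _ Hd1 (exp_pos (2 * D)) (Fdenom_compare x)).
  change (Fprime mu nu g1 hinv1 kappa1 x) with (kappa1 / Fdenom mu nu g1 hinv1 x).
  change (Fprime mu nu g2 hinv2 kappa2 x) with (kappa2 / Fdenom mu nu g2 hinv2 x).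
  replace (exp (2 * D) / kappa1 * (kappa1 / Fdenom mu nu g1 hinv1 x))
    with (exp (2 * D) * / Fdenom mu nu g1 hinv1 x) by (field; lra).
  replace (/ kappa2 * (kappa2 / Fdenom mu nu g2 hinv2 x))
    with (/ Fdenom mu nu g2 hinv2 x) by (field; lra).
  exact H.
Qed.

(* The normalisation (mu - nu) pi transfers this to the constants:
   e^{2D} F1/kappa1 - F2/kappa2 is nondecreasing, which compares its limits at -oo and +oo. *)
Lemma kappa_compare : kappa1 <= exp (2 * D) * kappa2.
Proof.
  pose proof HF1 as [Hk1 [Hc1 [Hd1 [Hp1 Hm1]]]].
  pose proof HF2 as [Hk2 [Hc2 [Hd2 [Hp2 Hm2]]]].
  set (u := exp (2 * D) / kappa1). set (v := / kappa2).
  set (h := fun t => u * F1 t - v * F2 t).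
  assert (Hmono : forall a b, a <= b -> h a <= h b).
  { apply (nondecr_global h (fun t => u * Fprime mu nu g1 hinv1 kappa1 t
                                   - v * Fprime mu nu g2 hinv2 kappa2 t)).
    - intro t. apply continuity_pt_minus.
      + apply continuity_pt_scal with (f := F1). apply Hc1.
      + apply continuity_pt_scal with (f := F2). apply Hc2.
    - intros t Ht. apply derivable_pt_lim_minus.
      + apply derivable_pt_lim_scal with (f := F1). auto.
      + apply derivable_pt_lim_scal with (f := F2). auto.
    - intros t Ht. pose proof (normalised_Fprime_compare t Ht). unfold u, v. lra. }
  assert (Hlimp : lim_pinfty h 0) by (apply (lim_pinfty_comb F1 F2 h u v 0 0); auto; ring).
  assert (Hlimm : lim_minfty h ((v - u) * ((mu - nu) * PI)))
    by (apply (lim_minfty_comb F1 F2 h u v (- ((mu - nu) * PI)) (- ((mu - nu) * PI)));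
        auto; ring).
  assert (H0p : h 0 <= 0) by (apply (lim_pinfty_lower h 0 0 (h 0) Hlimp); auto).
  assert (H0m : (v - u) * ((mu - nu) * PI) <= h 0)
    by (apply (lim_minfty_upper h _ 0 (h 0) Hlimm); auto).
  assert (Hvu : v <= u).
  { pose proof PI_RGT_0. assert (0 < (mu - nu) * PI) by (apply Rmult_lt_0_compat; lra).
    nra. }
  unfold u, v in Hvu. pose proof (exp_pos (2 * D)).
  apply Rmult_le_reg_r with (/ kappa1 * / kappa2).
  - apply Rmult_lt_0_compat; apply Rinv_0_lt_compat; lra.
  - replace (kappa1 * (/ kappa1 * / kappa2)) with (/ kappa2) by (field; lra).
    replace (exp (2 * D) * kappa2 * (/ kappa1 * / kappa2)) with (exp (2 * D) / kappa1)
      by (field; lra).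
    exact Hvu.
Qed.

End OneSidedComparison.

(* F2' <= e^{4D} F1' when |g1 - g2| <= D: e^{2D} from kappa, e^{2D} from Fdenom. *)
Lemma Fprime_compare (mu nu M D kappa1 kappa2 : R) (g1 g2 hinv1 hinv2 F1 F2 : R -> R) :
  0 < nu -> nu < mu ->
  (forall x, Rabs (g1 x) <= M) -> (forall x, Rabs (g2 x) <= M) ->
  (forall x, Rabs (g1 x - g2 x) <= D) ->
  is_hinv mu nu g1 hinv1 -> is_hinv mu nu g2 hinv2 ->
  is_F mu nu g1 hinv1 kappa1 F1 -> is_F mu nu g2 hinv2 kappa2 F2 ->
  forall x, x <> 0 ->
  Fprime mu nu g2 hinv2 kappa2 x <= exp (4 * D) * Fprime mu nu g1 hinv1 kappa1 x.
Proof.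
  intros Hnu Hmn Hg1 Hg2 HD Hh1 Hh2 HF1 HF2 x Hx.
  assert (HD12 : forall t, g1 t - g2 t <= D)
    by (intro t; pose proof (HD t) as H; apply Rabs_le_between in H; lra).
  assert (HD21 : forall t, g2 t - g1 t <= D)
    by (intro t; pose proof (HD t) as H; apply Rabs_le_between in H; lra).
  pose proof (kappa_compare mu nu M D kappa2 kappa1 g2 g1 hinv2 hinv1 F2 F1
                Hnu Hmn Hg2 Hg1 HD21 Hh2 Hh1 HF2 HF1) as Hk.
  pose proof (Fdenom_pos mu nu M g1 hinv1 Hnu Hmn Hg1 Hh1 x Hx) as Hd1.
  pose proof (inv_le_scaled _ _ _ Hd1 (exp_pos (2 * D))
                (Fdenom_compare mu nu M D g1 g2 hinv1 hinv2 Hnu Hmn Hg1 HD12 Hh1 Hh2 x)) as Hd.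
  destruct HF2 as [Hk2 _].
  change (Fprime mu nu g2 hinv2 kappa2 x) with (kappa2 * / Fdenom mu nu g2 hinv2 x).
  change (Fprime mu nu g1 hinv1 kappa1 x) with (kappa1 * / Fdenom mu nu g1 hinv1 x).
  replace (exp (4 * D) * (kappa1 * / Fdenom mu nu g1 hinv1 x))
    with (exp (2 * D) * kappa1 * (exp (2 * D) * / Fdenom mu nu g1 hinv1 x))
    by (replace (4 * D) with (2 * D + 2 * D) by ring; rewrite exp_plus; ring).
  apply Rmult_le_compat; try lra.
  left. apply Rinv_0_lt_compat. apply (Fdenom_pos mu nu M g2 hinv2); auto.
Qed.

Lemma exp_ratio_diff (t a b : R) : 0 <= t -> 0 <= a ->
  b <= exp t * a -> a <= exp t * b -> Rabs (a - b) <= t * exp t * a.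
Proof.
  intros Ht Ha Hba Hab.
  pose proof (exp_ineq1_le (- t)). pose proof (exp_pos t). pose proof (exp_pos (- t)).
  assert (E : exp t * exp (- t) = 1) by (rewrite <- exp_plus, Rplus_opp_r; apply exp_0).
  assert (Hgrow : exp t - 1 <= t * exp t) by nra.
  assert (Hshrink : exp (- t) * a <= b).
  { apply Rmult_le_compat_l with (r := exp (- t)) in Hab; [|lra].
    replace (exp (- t) * (exp t * b)) with (exp t * exp (- t) * b) in Hab by ring.
    rewrite E in Hab. lra. }
  assert (t * a <= t * exp t * a).
  { pose proof (exp_ineq1_le t). assert (0 <= t * a) by nra.
    replace (t * exp t * a) with (t * a * exp t) by ring. nra. }
  apply Rabs_le. split; nra.
Qed.

Definition fprime_const (mu nu M : R) : R :=
  4 * exp (8 * M) * kappa_max mu nu M * (mu * exp (2 * M)).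

Lemma Fprime_diff (mu nu M D kappa1 kappa2 : R) (g1 g2 hinv1 hinv2 F1 F2 : R -> R) :
  0 < nu -> nu < mu -> 0 <= D <= 2 * M ->
  (forall x, Rabs (g1 x) <= M) -> (forall x, Rabs (g2 x) <= M) ->
  (forall x, Rabs (g1 x - g2 x) <= D) ->
  is_hinv mu nu g1 hinv1 -> is_hinv mu nu g2 hinv2 ->
  is_F mu nu g1 hinv1 kappa1 F1 -> is_F mu nu g2 hinv2 kappa2 F2 ->
  forall x, x <> 0 ->
  Rabs (Fprime mu nu g1 hinv1 kappa1 x - Fprime mu nu g2 hinv2 kappa2 x)
  <= fprime_const mu nu M * D / rho mu nu x.
Proof.
  intros Hnu Hmn HD Hg1 Hg2 HDg Hh1 Hh2 HF1 HF2 x Hx.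
  assert (HDg' : forall t, Rabs (g2 t - g1 t) <= D)
    by (intro t; rewrite Rabs_minus_sym; apply HDg).
  pose proof (Fprime_compare mu nu M D kappa1 kappa2 g1 g2 hinv1 hinv2 F1 F2
                Hnu Hmn Hg1 Hg2 HDg Hh1 Hh2 HF1 HF2 x Hx) as H21.
  pose proof (Fprime_compare mu nu M D kappa2 kappa1 g2 g1 hinv2 hinv1 F2 F1
                Hnu Hmn Hg2 Hg1 HDg' Hh2 Hh1 HF2 HF1 x Hx) as H12.
  pose proof (Fprime_pos mu nu M kappa1 g1 hinv1 F1 Hnu Hmn Hg1 Hh1 HF1 x Hx) as Hpos.
  pose proof (Fprime_bounds mu nu M kappa1 g1 hinv1 F1 Hnu Hmn Hg1 Hh1 HF1 x Hx) as [_ Hup].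
  pose proof (kappa_bound mu nu M kappa1 g1 hinv1 F1 Hnu Hmn Hg1 Hh1 HF1) as Hk.
  destruct HF1 as [Hk1 _].
  eapply Rle_trans; [apply (exp_ratio_diff (4 * D)); lra|].
  assert (Hexp : exp (4 * D) <= exp (8 * M)) by (apply exp_le; lra).
  pose proof (rho_pos mu nu x). pose proof (exp_pos (4 * D)). pose proof (exp_pos (2 * M)).
  assert (Hup' : Fprime mu nu g1 hinv1 kappa1 x <= kappa_max mu nu M * (mu * exp (2 * M)) / rho mu nu x).
  { eapply Rle_trans; [exact Hup|]. unfold Rdiv.
    apply Rmult_le_compat_r; [left; now apply Rinv_0_lt_compat|].
    apply Rmult_le_compat_r; [|exact Hk]. pose proof (exp_pos (2 * M)). nra. }
  apply Rle_trans with (4 * D * exp (8 * M) * (kappa_max mu nu M * (mu * exp (2 * M)) / rho mu nu x)).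
  - apply Rmult_le_compat; try nra.
  - right. unfold fprime_const. field. lra.
Qed.

Lemma rho_inv_large (mu nu x : R) : x <> 0 -> nu <= mu ->
  / rho mu nu x <= Rpower (Rabs x) (- (2 * mu)).
Proof.
  intros Hx Hmn. rewrite Rpower_Ropp. apply Rinv_le_contravar; [apply Rpower_pos|].
  unfold rho. replace (2 * mu) with (2 * nu + 2 * (mu - nu)) by ring.
  rewrite Rpower_plus. apply Rmult_le_compat_l; [left; apply Rpower_pos|].
  rewrite <- Rpower_mult. apply Rle_Rpower_l; [lra|].
  replace (Rpower (Rabs x) 2) with (x ^ 2).
  - split; [now apply pow2_gt_0|lra].
  - replace 2 with (1 + 1) by ring.
    rewrite Rpower_plus, Rpower_1 by (now apply Rabs_pos_lt).
    rewrite <- pow2_abs. ring.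
Qed.

Lemma rho_inv_small (mu nu x : R) : nu <= mu ->
  / rho mu nu x <= Rpower (Rabs x) (- (2 * nu)).
Proof.
  intros Hmn. rewrite Rpower_Ropp. apply Rinv_le_contravar; [apply Rpower_pos|].
  unfold rho. rewrite <- (Rmult_1_r (Rpower (Rabs x) (2 * nu))) at 1.
  apply Rmult_le_compat_l; [left; apply Rpower_pos|].
  rewrite <- (Rpower_1_base (mu - nu)) at 1. apply Rle_Rpower_l; [lra|].
  pose proof (pow2_ge_0 x). split; lra.
Qed.

Lemma fprime_const_pos (mu nu M : R) : 0 < nu < mu -> 0 < fprime_const mu nu M.
Proof.
  intros Hmn. pose proof PI_RGT_0. pose proof (exp_pos (2 * M)). pose proof (exp_pos (8 * M)).
  pose proof (Rpower_pos 2 (mu - nu)).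
  assert (0 < kappa_max mu nu M).
  { unfold kappa_max. apply Rdiv_lt_0_compat; [|lra].
    assert (0 < (mu - nu) * PI) by (apply Rmult_lt_0_compat; lra).
    assert (0 < (mu - nu) * PI * Rpower 2 (mu - nu)) by (apply Rmult_lt_0_compat; lra).
    apply Rmult_lt_0_compat; lra. }
  unfold fprime_const.
  assert (0 < 4 * exp (8 * M)) by lra.
  assert (0 < 4 * exp (8 * M) * kappa_max mu nu M) by (apply Rmult_lt_0_compat; lra).
  apply Rmult_lt_0_compat; [lra|]. apply Rmult_lt_0_compat; lra.
Qed.

Lemma rho_decay (f df : R -> R) (mu nu K : R) : 1 / 2 < mu -> 0 < nu < 1 / 2 -> 0 <= K ->
  continuity f -> (forall x, x <> 0 -> derivable_pt_lim f x (df x)) ->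
  (forall x, x <> 0 -> Rabs (df x) <= K / rho mu nu x) ->
  lim_pinfty f 0 -> lim_minfty f 0 ->
  (forall x, x <> 0 -> Rabs (f x) <= K * / (2 * mu - 1) * Rpower (Rabs x) (1 - 2 * mu)) /\
  (forall x, Rabs (f x) <= K * (/ (2 * mu - 1) + 2 / (1 - 2 * nu))).
Proof.
  intros Hmu Hnu HK Hfc Hfd Hdf Hp Hm.
  assert (Hpow : forall b, (forall x, x <> 0 -> / rho mu nu x <= Rpower (Rabs x) b) ->
                 forall x, x <> 0 -> Rabs (df x) <= K * Rpower (Rabs x) b).
  { intros b Hb x Hx. eapply Rle_trans; [now apply Hdf|].
    apply Rmult_le_compat_l; auto. }
  assert (Htail : forall x, x <> 0 ->
            Rabs (f x) <= K * / (2 * mu - 1) * Rpower (Rabs x) (1 - 2 * mu)).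
  { apply (tail_decay f df K mu); auto.
    apply Hpow. intros x Hx. apply rho_inv_large; auto. lra. }
  split; [exact Htail|]. intros x.
  assert (Hinv : 0 < / (2 * mu - 1)) by (apply Rinv_0_lt_compat; lra).
  assert (Hnear : 0 <= 2 / (1 - 2 * nu)) by (apply Rdiv_le_0_compat; lra).
  destruct (Rle_or_lt (Rabs x) 1) as [Hx|Hx].
  - assert (H1 : Rabs (f 1) <= K * / (2 * mu - 1)).
    { pose proof (Htail 1 R1_neq_R0) as H1. rewrite Rabs_R1, Rpower_1_base, Rmult_1_r in H1.
      exact H1. }
    assert (Hx1 : Rabs (f x - f 1) <= 2 * K / (1 + - (2 * nu))).
    { apply (near_origin_bound f df K (- (2 * nu))); auto; [lra|].
      apply Hpow. intros t _. apply rho_inv_small. lra. }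
    replace (2 * K / (1 + - (2 * nu))) with (K * (2 / (1 - 2 * nu))) in Hx1 by (field; lra).
    pose proof (Rabs_triang (f x - f 1) (f 1)).
    replace (f x - f 1 + f 1) with (f x) in * by ring. nra.
  - assert (Hx0 : x <> 0) by (intros ->; rewrite Rabs_R0 in Hx; lra).
    assert (Hr : Rpower (Rabs x) (1 - 2 * mu) <= 1).
    { rewrite <- (Rpower_O (Rabs x)) at 2 by lra. apply Rle_Rpower; lra. }
    eapply Rle_trans; [now apply Htail|].
    assert (0 <= K * / (2 * mu - 1)) by nra.
    apply Rle_trans with (K * / (2 * mu - 1) * 1); [apply Rmult_le_compat_l; lra|nra].
Qed.

Lemma sup_norm_bounds (g1 g2 : R -> R) (M D : R) :
  (forall x, Rabs (g1 x) <= M) -> (forall x, Rabs (g2 x) <= M) ->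
  is_sup_norm (fun x => g2 x - g1 x) D ->
  (forall x, Rabs (g1 x - g2 x) <= D) /\ 0 <= D <= 2 * M.
Proof.
  intros Hg1 Hg2 [Hub Hleast].
  assert (Hpt : forall x, Rabs (g1 x - g2 x) <= D)
    by (intro x; rewrite Rabs_minus_sym; apply Hub; now exists x).
  split; [exact Hpt|]. split.
  - pose proof (Hpt 0). pose proof (Rabs_pos (g1 0 - g2 0)). lra.
  - apply Hleast. intros y [x ->]. unfold Rminus.
    eapply Rle_trans; [apply Rabs_triang|]. rewrite Rabs_Ropp.
    pose proof (Hg1 x). pose proof (Hg2 x). lra.
Qed.

Lemma F_difference_estimates (mu nu M D kappa1 kappa2 : R) (g1 g2 hinv1 hinv2 F1 F2 : R -> R) :
  1 / 2 < mu -> 0 < nu < 1 / 2 -> 0 <= D <= 2 * M ->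
  (forall x, Rabs (g1 x) <= M) -> (forall x, Rabs (g2 x) <= M) ->
  (forall x, Rabs (g1 x - g2 x) <= D) ->
  is_hinv mu nu g1 hinv1 -> is_hinv mu nu g2 hinv2 ->
  is_F mu nu g1 hinv1 kappa1 F1 -> is_F mu nu g2 hinv2 kappa2 F2 ->
  (forall x, x <> 0 ->
     Rabs (Fprime mu nu g1 hinv1 kappa1 x - Fprime mu nu g2 hinv2 kappa2 x)
     <= fprime_const mu nu M * D / rho mu nu x) /\
  (forall x, x <> 0 ->
     Rabs (F1 x - F2 x) <= fprime_const mu nu M * D * / (2 * mu - 1)
                           * Rpower (Rabs x) (1 - 2 * mu)) /\
  (forall x, Rabs (F1 x - F2 x)
             <= fprime_const mu nu M * D * (/ (2 * mu - 1) + 2 / (1 - 2 * nu))).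
Proof.
  intros Hmu Hnu HD Hg1 Hg2 HDg Hh1 Hh2 HF1 HF2.
  pose proof (Fprime_diff mu nu M D kappa1 kappa2 g1 g2 hinv1 hinv2 F1 F2
                (proj1 Hnu) ltac:(lra) HD Hg1 Hg2 HDg Hh1 Hh2 HF1 HF2) as Hdiff.
  pose proof HF1 as [_ [Hc1 [Hd1 [Hp1 Hm1]]]]. pose proof HF2 as [_ [Hc2 [Hd2 [Hp2 Hm2]]]].
  assert (HC : 0 <= fprime_const mu nu M * D)
    by (apply Rmult_le_pos; [left; apply fprime_const_pos|]; lra).
  assert (Hlp : lim_pinfty (fun t => F1 t - F2 t) 0)
    by (apply (lim_pinfty_comb F1 F2 _ 1 1 0 0); auto; intros; ring).
  assert (Hlm : lim_minfty (fun t => F1 t - F2 t) 0)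
    by (apply (lim_minfty_comb F1 F2 _ 1 1 (- ((mu - nu) * PI)) (- ((mu - nu) * PI)));
        auto; intros; ring).
  split; [exact Hdiff|].
  apply (rho_decay (fun t => F1 t - F2 t)
           (fun t => Fprime mu nu g1 hinv1 kappa1 t - Fprime mu nu g2 hinv2 kappa2 t));
    auto.
  - exact (continuity_minus F1 F2 Hc1 Hc2).
  - intros x Hx. apply derivable_pt_lim_minus; auto.
Qed.

Theorem lemma5p5 (mu nu M : R) :
  1 / 2 < mu -> 0 < nu -> nu < 1 / 2 -> 0 < M ->
  exists c : R,
  forall (g1 g2 hinv1 hinv2 F1 F2 : R -> R) (kappa1 kappa2 D : R),
    in_X g1 -> in_X g2 ->
    (forall x, Rabs (g1 x) <= M) -> (forall x, Rabs (g2 x) <= M) ->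
    is_hinv mu nu g1 hinv1 -> is_hinv mu nu g2 hinv2 ->
    is_F mu nu g1 hinv1 kappa1 F1 -> is_F mu nu g2 hinv2 kappa2 F2 ->
    is_sup_norm (fun x => g2 x - g1 x) D ->
    (forall x, x <> 0 ->
       Rabs (Fprime mu nu g1 hinv1 kappa1 x - Fprime mu nu g2 hinv2 kappa2 x)
       <= c * D * (1 / (Rpower (Rabs x) (2 * nu) * Rpower (x ^ 2 + 1) (mu - nu)))) /\
    (forall x, 1 <= Rabs x ->
       Rabs (F1 x - F2 x) <= c * D * Rpower (Rabs x) (1 - 2 * mu)) /\
    (forall x, Rabs (F1 x - F2 x) <= c * D).
Proof.
  intros Hmu Hnu Hnu2 HM.
  set (C := fprime_const mu nu M). set (s := / (2 * mu - 1) + 2 / (1 - 2 * nu)).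
  assert (HC : 0 < C) by (apply fprime_const_pos; lra).
  assert (Hs : 0 < / (2 * mu - 1) <= s).
  { assert (0 <= 2 / (1 - 2 * nu)) by (apply Rdiv_le_0_compat; lra).
    split; [apply Rinv_0_lt_compat|unfold s]; lra. }
  exists (C * (1 + s)).
  intros g1 g2 hinv1 hinv2 F1 F2 kappa1 kappa2 D _ _ Hg1 Hg2 Hh1 Hh2 HF1 HF2 HD.
  destruct (sup_norm_bounds g1 g2 M D Hg1 Hg2 HD) as [HDg HD0].
  destruct (F_difference_estimates mu nu M D kappa1 kappa2 g1 g2 hinv1 hinv2 F1 F2
              Hmu ltac:(lra) HD0 Hg1 Hg2 HDg Hh1 Hh2 HF1 HF2) as [Hder [Htail Hglob]].
  change (fprime_const mu nu M) with C in Hder, Htail, Hglob.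
  change (/ (2 * mu - 1) + 2 / (1 - 2 * nu)) with s in Hglob.
  (* Every estimate has the form C D k Y with k <= 1 + s. *)
  assert (Hscale : forall k Y, 0 <= Y -> k <= 1 + s -> C * D * k * Y <= C * (1 + s) * D * Y).
  { intros k Y HY Hk. replace (C * (1 + s) * D * Y) with (C * D * (1 + s) * Y) by ring.
    apply Rmult_le_compat_r; [lra|]. apply Rmult_le_compat_l; nra. }
  split; [|split].
  - intros x Hx. pose proof (rho_pos mu nu x).
    eapply Rle_trans; [now apply Hder|].
    replace (C * D / rho mu nu x) with (C * D * 1 * (1 / rho mu nu x)) by (field; lra).
    apply Hscale; [left; apply Rdiv_lt_0_compat; [lra|apply rho_pos]|lra].
  - intros x Hx. eapply Rle_trans; [apply Htail; intros ->; rewrite Rabs_R0 in Hx; lra|].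
    apply Hscale; [left; apply Rpower_pos|lra].
  - intros x. rewrite <- (Rmult_1_r (C * (1 + s) * D)).
    eapply Rle_trans; [apply Hglob|]. rewrite <- (Rmult_1_r (C * D * s)). apply Hscale; lra.
Qed.
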